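(* Let $\Delta$ be a simplicial complex on a finite vertex set $[m]$. If $\Delta$ is shifted (respectively, compressed), then so is $\mathrm{Inc}(\Delta)$.
   Context: $\mathbb{N}=\{1,2,3,\dots\}$, $[m]=\{1,\dots,m\}$. A simplicial complex on $[m]$ is a collection of subsets of $[m]$ closed under taking subsets. For $d\ge1$, $F_d(\Delta)$ is the set of faces of $\Delta$ with exactly $d$ elements, viewed in $\binom{\mathbb{N}}{d}$ (the $d$-subsets of $\mathbb{N}$, written $\mathbf{u}=(u_1,\dots,u_d)$ with $u_1<\cdots<u_d$). Squashed order: $\mathbf{u}<\mathbf{v}$ iff the largest element of the symmetric difference of $\mathbf u,\mathbf v$ lies in $\mathbf{v}$; a finite family in $\binom{\mathbb{N}}{d}$ is compressed if it consists of the smallest elements of $\binom{\mathbb{N}}{d}$ in this order. Borel order: $\mathbf{v}\le_B\mathbf{u}$ iff $v_i\le u_i$ for all $i$; a family is shifted if it contains every $\mathbf{v}\le_B\mathbf{u}$ for each of its members $\mathbf{u}$. $\Delta$ is shifted (resp. compressed) if $F_d(\Delta)$ is shifted (resp. compressed) for every $d\ge1$. $\mathrm{Inc}_1$ is the set of maps $\pi\colon\mathbb{N}\to\mathbb{N}$ with $\pi(j)<\pi(j+1)$ and $\pi(j)\le j+1$ for all $j$, acting by $\pi(\mathbf{u})=(\pi(u_1),\ldots,\pi(u_d))$; for $\mathcal{F}\subseteq\binom{\mathbb{N}}{d}$, $\mathrm{Inc}(\mathcal{F})=\{\pi(\mathbf{u})\mid\mathbf{u}\in\mathcal{F},\pi\in\mathrm{Inc}_1\}$,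 and $\mathrm{Inc}(\Delta)=\bigcup_{d\ge1}\mathrm{Inc}(F_d(\Delta))$ (together with the empty face), which is again a simplicial complex. *)

(* Finite subsets of N = {1,2,...} are represented by their
   strictly increasing enumeration (a seq nat), i.e. u = (u_1 < ... < u_d). *)
From mathcomp Require Import all_boot.
Set Implicit Arguments. Unset Strict Implicit. Unset Printing Implicit Defensive.

Definition dsub (d : nat) (u : seq nat) : Prop :=
  [/\ size u = d, sorted ltn u & all (fun x => 0 < x) u].

Definition sfamily := seq nat -> Prop.

Definition simplicial_complex_on (m : nat) (D : sfamily) : Prop :=
  (forall u, D u -> sorted ltn u /\ all (fun x => (0 < x) && (x <= m)) u) /\
  (forall u v, D u -> subseq v u -> D v).

Definition Fd (D : sfamily) (d : nat) : sfamily := fun u => D u /\ size u = d.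

Definition squashed_lt (u v : seq nat) : Prop :=
  exists x, [/\ x \in v, x \notin u & forall y, x < y -> (y \in u) = (y \in v)].

Definition borel_le (v u : seq nat) : Prop :=
  size v = size u /\ forall i, i < size u -> nth 0 v i <= nth 0 u i.

Definition finite_family (F : sfamily) : Prop :=
  exists N, forall u, F u -> all (fun x => x <= N) u.

Definition compressed_fam (d : nat) (F : sfamily) : Prop :=
  finite_family F /\
  forall u v, F u -> dsub d v -> squashed_lt v u -> F v.

Definition shifted_fam (d : nat) (F : sfamily) : Prop :=
  forall u v, F u -> dsub d v -> borel_le v u -> F v.

Definition shifted_cx (D : sfamily) : Prop :=
  forall d, 1 <= d -> shifted_fam d (Fd D d).

Definition compressed_cx (D : sfamily) : Prop :=
  forall d, 1 <= d -> compressed_fam d (Fd D d).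

(* Inc_1 : maps N -> N (values at 0 irrelevant), pi(j) < pi(j+1), pi(j) <= j+1 *)
Definition Inc1 (pi : nat -> nat) : Prop :=
  0 < pi 1 /\ forall j, 1 <= j -> pi j < pi j.+1 /\ pi j <= j.+1.

Definition Inc_fam (F : sfamily) : sfamily :=
  fun w => exists u pi, [/\ F u, Inc1 pi & w = map pi u].

Definition Inc_cx (D : sfamily) : sfamily :=
  fun w => w = [::] \/ exists d, 1 <= d /\ Inc_fam (Fd D d) w.

From mathcomp Require Import all_boot zify.
Set Implicit Arguments. Unset Strict Implicit. Unset Printing Implicit Defensive.

(* Every d-subset v of N is pi(lower v) for some pi in Inc_1: lower v lowers
   each entry v_i to max(i+1, v_i - 1), and pi is the identity up to c and
   the shift j |-> j+1 above c, where c+1 is the least positive integer not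
   in v.  Lowering is compatible with both orders: if v lies below a face
   pi(u) of Inc(Delta) in the Borel (resp. squashed) order, then lower v lies
   below u in the same order (or equals it), so lower v is a face of Delta
   by shiftedness (resp. compressedness), and hence v is a face of Inc(Delta). *)

Lemma sorted_ltn_nth_addn (s : seq nat) i j : sorted ltn s -> i <= j -> j < size s ->
  nth 0 s i + (j - i) <= nth 0 s j.
Proof.
move=> /(sortedP 0) s_lt le_ij; elim: j le_ij => [|j IHj] le_ij lt_js.
  by rewrite (_ : i = 0) ?subnn ?addn0 //; lia.
case: (ltnP i j.+1) => [lt_ij|le_ji]; last by rewrite (_ : i = j.+1) ?subnn ?addn0 //; lia.
have := IHj lt_ij (ltnW lt_js); have := s_lt j lt_js; lia.
Qed.

Lemma sorted_pos_nth_gt (s : seq nat) i : sorted ltn s -> all (fun x => 0 < x) s ->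
  i < size s -> i < nth 0 s i.
Proof.
move=> s_lt s_pos lt_is; have := sorted_ltn_nth_addn s_lt (leq0n i) lt_is.
have : 0 < nth 0 s 0 by apply: (all_nthP 0 s_pos); lia.
lia.
Qed.

Lemma Inc1_bounds pi t : Inc1 pi -> 0 < t -> t <= pi t <= t.+1.
Proof.
case=> pi1_gt0 pi_step; elim: t => [|t IHt] // _.
case: t IHt => [|t] IHt; first by have := pi_step 1 (leqnn 1); lia.
have := IHt (ltn0Sn t); have := pi_step t.+1 (ltn0Sn t).
have := pi_step t.+2 (ltn0Sn t.+1); lia.
Qed.

Lemma Inc1_lt pi a b : Inc1 pi -> 0 < a -> a < b -> pi a < pi b.
Proof.
move=> [_ pi_step] a_gt0; elim: b => [|b IHb] // lt_ab.
have [lt_pib _] := pi_step b (leq_trans a_gt0 (ltnSE lt_ab)).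
case: (ltnP a b) => [/IHb|le_ba]; first lia.
by have -> : a = b by lia.
Qed.

Lemma sorted_map_Inc1 pi (u : seq nat) : Inc1 pi -> sorted ltn u ->
  all (fun x => 0 < x) u -> sorted ltn (map pi u).
Proof.
move=> pi_Inc u_lt u_pos; rewrite sorted_map.
by apply: (sub_in_sorted _ u_pos u_lt) => x y x_gt0 _; apply: Inc1_lt.
Qed.

Definition skip c j := if j <= c then j else j.+1.

Lemma Inc1_skip c : Inc1 (skip c).
Proof. by split=> [|j _]; rewrite /skip; repeat case: ifP; lia. Qed.

Definition lower (v : seq nat) := mkseq (fun i => maxn i.+1 (nth 0 v i).-1) (size v).

Lemma size_lower v : size (lower v) = size v.
Proof. exact: size_mkseq. Qed.

Lemma nth_lower v i : i < size v -> nth 0 (lower v) i = maxn i.+1 (nth 0 v i).-1.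
Proof. exact: nth_mkseq. Qed.

Lemma sorted_lower v : sorted ltn v -> sorted ltn (lower v).
Proof.
move=> v_lt; apply/(sortedP 0) => i; rewrite size_lower => lt_i1.
rewrite !nth_lower //; last lia.
have := (sortedP 0 v_lt) i lt_i1; lia.
Qed.

Lemma dsub_lower d v : dsub d v -> dsub d (lower v).
Proof.
case=> sz_v /sorted_lower lower_lt _; split; rewrite ?size_lower //.
by apply/(all_nthP 0) => i; rewrite size_lower => lt_i; rewrite nth_lower //; lia.
Qed.

Lemma map_skip_lower (v : seq nat) : sorted ltn v -> all (fun x => 0 < x) v ->
  exists c, map (skip c) (lower v) = v.
Proof.
move=> v_lt v_pos.
pose c := find (fun i => nth 0 v i != i.+1) (iota 0 (size v)).
have le_c : c <= size v by rewrite -[leqRHS](size_iota 0) find_size.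
have run i : i < c -> nth 0 v i = i.+1.
  move=> lt_ic; have := before_find 0 lt_ic.
  by rewrite nth_iota ?add0n; [move/negbFE/eqP | lia].
have gap i : c <= i -> i < size v -> i.+2 <= nth 0 v i.
  move=> le_ci lt_i; have lt_c : c < size v by lia.
  have has_gap : has (fun i => nth 0 v i != i.+1) (iota 0 (size v)).
    by rewrite has_find size_iota.
  have := nth_find 0 has_gap; rewrite -/c nth_iota // add0n => /eqP ne_c.
  have := sorted_pos_nth_gt v_lt v_pos lt_c.
  have := sorted_ltn_nth_addn v_lt le_ci lt_i; lia.
exists c; apply: (eq_from_nth (x0 := 0)); first by rewrite size_map size_lower.
move=> i; rewrite size_map size_lower => lt_i.
rewrite (nth_map 0) ?size_lower // nth_lower // /skip.
case: (ltnP i c) => [lt_ic|le_ci]; [have := run _ lt_ic | have := gap _ le_ci lt_i];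
  by case: ifP => ? ?; lia.
Qed.

Lemma last_diff_nth (a b : seq nat) : size a = size b -> a <> b ->
  exists j, [/\ j < size b, nth 0 a j != nth 0 b j &
    forall l, j < l < size b -> nth 0 a l = nth 0 b l].
Proof.
move=> sz_ab neq_ab; pose P j := (j < size b) && (nth 0 a j != nth 0 b j).
have ex_P : exists j, P j.
  have /hasP[j] : has (fun j => nth 0 a j != nth 0 b j) (iota 0 (size b)).
    apply/negPn/negP => /hasPn eq_ab; apply: neq_ab.
    apply: (eq_from_nth (x0 := 0)) => // i lt_i.
    by apply/eqP/negbNE/eq_ab; rewrite mem_iota add0n -sz_ab lt_i.
  by rewrite mem_iota add0n => /andP[_ lt_j] ne_j; exists j; apply/andP.
have bnd_P j : P j -> j <= size b by case/andP => /ltnW.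
case: (ex_maxnP ex_P bnd_P) => j /andP[lt_j ne_j] max_j.
exists j; split=> // l /andP[lt_jl lt_l]; apply/eqP; apply: contraTT lt_jl => ne_l.
by rewrite -leqNgt max_j //; apply/andP.
Qed.

Lemma squashed_lt_nth (a b : seq nat) j : sorted ltn a -> sorted ltn b ->
  size a = size b -> j < size b -> nth 0 a j < nth 0 b j ->
  (forall l, j < l < size b -> nth 0 a l = nth 0 b l) -> squashed_lt a b.
Proof.
move=> a_lt b_lt sz_ab lt_j lt_abj eq_above.
have above (s : seq nat) y : sorted ltn s -> size s = size b -> nth 0 s j < y ->
    y \in s -> exists2 k, j < k < size b & nth 0 s k = y.
  move=> s_lt sz_s lt_y /(nthP 0)[k lt_k eq_y]; exists k => //.
  have {}eq_y : nth 0 s k = y := eq_y; rewrite -eq_y in lt_y.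
  rewrite -sz_s lt_k andbT ltnNge; apply/negP => le_kj.
  have := sorted_ltn_nth_addn s_lt le_kj (leq_trans lt_j (eq_leq (esym sz_s))); lia.
exists (nth 0 b j); split; first exact: mem_nth.
  apply/negP => /(above a _ a_lt sz_ab lt_abj)[k /andP[lt_jk lt_k]].
  rewrite eq_above ?lt_jk //; have := sorted_ltn_nth_addn b_lt (ltnW lt_jk) lt_k; lia.
move=> y lt_y; apply/idP/idP.
- case/(above a _ a_lt sz_ab (ltn_trans lt_abj lt_y)) => k range_k <-.
  by rewrite eq_above // mem_nth //; case/andP: range_k.
- case/(above b _ b_lt erefl lt_y) => k range_k <-.
  by rewrite -eq_above // mem_nth // sz_ab; case/andP: range_k.
Qed.

Lemma squashed_lt_asym (a b : seq nat) : squashed_lt a b -> ~ squashed_lt b a.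
Proof.
move=> [x [xb xa x_top]] [y [ya yb y_top]].
case: (ltngtP x y) => [lt_xy|lt_yx|eq_xy].
- by move: (x_top y lt_xy); rewrite ya (negbTE yb).
- by move: (y_top x lt_yx); rewrite xb (negbTE xa).
- by move: xb; rewrite eq_xy (negbTE yb).
Qed.

Lemma squashed_lt_last_diff (a b : seq nat) : sorted ltn a -> sorted ltn b ->
  size a = size b -> squashed_lt a b ->
  exists j, [/\ j < size b, nth 0 a j < nth 0 b j &
    forall l, j < l < size b -> nth 0 a l = nth 0 b l].
Proof.
move=> a_lt b_lt sz_ab lt_ab.
have neq_ab : a <> b by case: lt_ab => x [xb xa _] eq_ab; move: xa; rewrite eq_ab xb.
have [j [lt_j ne_j eq_above]] := last_diff_nth sz_ab neq_ab.
exists j; split=> //; rewrite ltn_neqAle ne_j leqNgt /=; apply/negP => lt_baj.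
apply: (squashed_lt_asym lt_ab).
apply: (squashed_lt_nth b_lt a_lt (esym sz_ab) (j := j)); rewrite ?sz_ab //.
by move=> l /eq_above ->.
Qed.

(* If [nth 0 a j <= j.+1], sortedness pushes [a] below the positive [b] also at
   every index under [j]. *)
Lemma suffix_le_squashed (a b : seq nat) j : sorted ltn a -> sorted ltn b ->
  all (fun x => 0 < x) b -> size a = size b -> j < size b ->
  (forall l, j <= l < size b -> nth 0 a l <= nth 0 b l) ->
  nth 0 a j < nth 0 b j \/ nth 0 a j <= j.+1 ->
  a = b \/ squashed_lt a b.
Proof.
move=> a_lt b_lt b_pos sz_ab lt_j le_above a_j.
case: (eqVneq a b) => [->|/eqP neq_ab]; [by left | right].
have [k [lt_k ne_k eq_above]] := last_diff_nth sz_ab neq_ab.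
apply: (squashed_lt_nth a_lt b_lt sz_ab lt_k _ eq_above).
rewrite ltn_neqAle ne_k /=.
case: (leqP j k) => [le_jk|lt_kj]; first by apply: le_above; rewrite le_jk.
have := eq_above j; rewrite lt_kj lt_j => /(_ isT) eq_j.
have := sorted_ltn_nth_addn a_lt (ltnW lt_kj) (leq_trans lt_j (eq_leq (esym sz_ab))).
have := sorted_pos_nth_gt b_lt b_pos lt_k; lia.
Qed.

Section LowerBelowInc.

Variables (pi : nat -> nat) (u v : seq nat).
Hypotheses (pi_Inc : Inc1 pi) (u_lt : sorted ltn u) (u_pos : all (fun x => 0 < x) u).

Let u_bounds i : i < size u ->
  i < nth 0 u i /\ nth 0 u i <= pi (nth 0 u i) <= (nth 0 u i).+1.
Proof.
move=> lt_i; split; first exact: sorted_pos_nth_gt.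
by apply: Inc1_bounds => //; apply: (all_nthP 0 u_pos).
Qed.

Lemma borel_le_lower : borel_le v (map pi u) -> borel_le (lower v) u.
Proof.
move=> [sz_v le_v]; rewrite size_map in sz_v le_v.
split=> [|i lt_i]; first by rewrite size_lower.
rewrite nth_lower ?sz_v //; have := le_v i lt_i; rewrite (nth_map 0) //.
have := u_bounds lt_i; lia.
Qed.

Lemma lower_squashed : sorted ltn v -> size v = size u ->
  squashed_lt v (map pi u) -> lower v = u \/ squashed_lt (lower v) u.
Proof.
move=> v_lt sz_v lt_vw.
have w_lt := sorted_map_Inc1 pi_Inc u_lt u_pos.
have sz_vw : size v = size (map pi u) by rewrite size_map.
have [j [lt_j lt_vwj eq_above]] := squashed_lt_last_diff v_lt w_lt sz_vw lt_vw.
rewrite size_map in lt_j eq_above; rewrite (nth_map 0) // in lt_vwj.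
apply: (suffix_le_squashed (sorted_lower v_lt) u_lt u_pos (j := j)); rewrite ?size_lower //.
- move=> l /andP[le_jl lt_l]; rewrite nth_lower ?sz_v //.
  have := u_bounds lt_l; case: (ltngtP j l) le_jl => // [lt_jl|<-] _.
    by rewrite eq_above ?lt_jl // (nth_map 0) //; lia.
  have := u_bounds lt_j; lia.
- by rewrite nth_lower ?sz_v //; have := u_bounds lt_j; lia.
Qed.

End LowerBelowInc.

Lemma Fd_Inc_cxP D d w : 0 < d -> Fd (Inc_cx D) d w ->
  exists u pi, [/\ Fd D d u, Inc1 pi & w = map pi u].
Proof.
move=> d_gt0 [[->|[d' [_ [u [pi [Du pi_Inc ->]]]]]] sz_w]; first by move: sz_w => /= ?; lia.
by exists u, pi; split=> //; split; [case: Du | rewrite -sz_w size_map].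
Qed.

Lemma Fd_Inc_cx_lower D d v : 0 < d -> dsub d v -> Fd D d (lower v) ->
  Fd (Inc_cx D) d v.
Proof.
move=> d_gt0 [sz_v v_lt v_pos] Dv; have [c <-] := map_skip_lower v_lt v_pos.
split; last by rewrite size_map size_lower.
by right; exists d; split=> //; exists (lower v), (skip c); split=> //; apply: Inc1_skip.
Qed.

Section IncOfComplex.

Variable D : sfamily.
Hypothesis D_sorted : forall u, D u -> sorted ltn u /\ all (fun x => 0 < x) u.

Lemma shifted_Inc_cx : shifted_cx D -> shifted_cx (Inc_cx D).
Proof.
move=> D_sh d d_gt0 w v /(Fd_Inc_cxP d_gt0)[u [pi [Du pi_Inc ->]]] v_dsub le_vw.
have [u_lt u_pos] := D_sorted Du.1.
have le_lower : borel_le (lower v) u := borel_le_lower pi_Inc u_lt u_pos le_vw.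
apply: Fd_Inc_cx_lower => //; exact: D_sh d d_gt0 u _ Du (dsub_lower v_dsub) le_lower.
Qed.

Lemma compressed_Inc_cx : compressed_cx D -> compressed_cx (Inc_cx D).
Proof.
move=> D_cmp d d_gt0; have [[N bnd_N] D_sq] := D_cmp d d_gt0; split.
  exists N.+1 => w /(Fd_Inc_cxP d_gt0)[u [pi [Du pi_Inc ->]]].
  have [_ u_pos] := D_sorted Du.1.
  apply/allP => _ /mapP[x xu ->].
  have := allP (bnd_N u Du) x xu; have := Inc1_bounds pi_Inc (allP u_pos x xu); lia.
move=> w v /(Fd_Inc_cxP d_gt0)[u [pi [Du pi_Inc ->]]] v_dsub lt_vw.
have [u_lt u_pos] := D_sorted Du.1.
have [sz_v v_lt _] := v_dsub.
apply: Fd_Inc_cx_lower => //.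
have [->|lt_lower] :=
  lower_squashed pi_Inc u_lt u_pos v_lt (etrans sz_v (esym Du.2)) lt_vw; first exact: Du.
exact: D_sq u _ Du (dsub_lower v_dsub) lt_lower.
Qed.

End IncOfComplex.

Theorem corollary4p1 (m : nat) (D : sfamily) :
  simplicial_complex_on m D ->
  (shifted_cx D -> shifted_cx (Inc_cx D)) /\
  (compressed_cx D -> compressed_cx (Inc_cx D)).
Proof.
move=> [D_faces _].
have D_sorted u : D u -> sorted ltn u /\ all (fun x => 0 < x) u.
  by case/D_faces => u_lt /allP u_bnd; split=> //; apply/allP => x /u_bnd /andP[].
by split; [exact: shifted_Inc_cx | exact: compressed_Inc_cx].
Qed.
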